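(* There is exactly one subset $\mathcal{U}\subseteq\mathbb{P}_2(3)$ with $|\mathcal{U}|=2^3$ that is an equidistant linear code (for some choice of the addition $\boxplus$).
   Context: $\mathbb{P}_2(3)$ denotes the set of all subspaces of $\mathbb{F}_2^3$. For subspaces $X,Y$ the subspace distance is $d_S(X,Y)=\dim X+\dim Y-2\dim(X\cap Y)$. A linear code in $\mathbb{P}_q(n)$ is a subset $\mathcal{U}\subseteq\mathbb{P}_q(n)$ with $\{0\}\in\mathcal{U}$ for which there exists a map $\boxplus:\mathcal{U}\times\mathcal{U}\to\mathcal{U}$ such that (i) $(\mathcal{U},\boxplus)$ is an abelian group; (ii) its identity element is $\{0\}$; (iii) $X\boxplus X=\{0\}$ for all $X\in\mathcal{U}$; (iv) $d_S(Y_1\boxplus X,Y_2\boxplus X)=d_S(Y_1,Y_2)$ for all $Y_1,Y_2,X\in\mathcal{U}$. It is equidistant if there is $r$ with $d_S(X,Y)=r$ for all distinct $X,Y\in\mathcal{U}$. *)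

From mathcomp Require Import all_boot all_algebra finmap.
Set Implicit Arguments. Unset Strict Implicit. Unset Printing Implicit Defensive.
Local Open Scope ring_scope.
Local Open Scope fset_scope.

Definition subsp (F : fieldType) (n : nat) := {vspace 'rV[F]_n}.

Definition dS (F : fieldType) (n : nat) (X Y : subsp F n) : nat :=
  (\dim X + \dim Y - 2 * \dim (X :&: Y)%VS)%N.

Definition linear_code_op (F : fieldType) (n : nat) (U : {fset subsp F n})
    (op : subsp F n -> subsp F n -> subsp F n) : Prop :=
  (forall X Y, X \in U -> Y \in U -> op X Y \in U) /\
      (forall X Y Z, X \in U -> Y \in U -> Z \in U -> op X (op Y Z) = op (op X Y) Z) /\
      (forall X Y, X \in U -> Y \in U -> op X Y = op Y X) /\
      (forall X, X \in U -> op 0%VS X = X /\ op X 0%VS = X) /\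
      (forall X, X \in U -> exists2 Y, Y \in U & op X Y = 0%VS) /\
      (forall X, X \in U -> op X X = 0%VS) /\
      (forall Y1 Y2 X, Y1 \in U -> Y2 \in U -> X \in U ->
          dS (op Y1 X) (op Y2 X) = dS Y1 Y2).

Definition linear_code (F : fieldType) (n : nat) (U : {fset subsp F n}) : Prop :=
  (0%VS : subsp F n) \in U /\ exists op, linear_code_op U op.

Definition equidistant (F : fieldType) (n : nat) (U : {fset subsp F n}) : Prop :=
  exists r : nat, forall X Y, X \in U -> Y \in U -> X != Y -> dS X Y = r.

From mathcomp Require Import all_boot all_algebra finmap zify.

(* If U is equidistant with constant r and contains {0}, every nonzero X in U
   has dimension d(0, X) = r, and two distinct nonzero members X, Y give
   r = 2 r - 2 dim (X :&: Y), so r is even; in F^3 this forces r = 2.  Hence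
   a code with 8 elements is contained in {0} together with the 7 planes of
   F_2^3, and equals it by counting.  Conversely, the planes are exactly the
   kernels of the nonzero functionals x |-> x v^T, which over F_2 determine v;
   so v |-> (0 if v = 0, else ker v) is a bijection from F_2^3 onto this code.
   Transporting the addition of F_2^3 along it gives the group law, and since
   all distances between distinct members equal 2, translations are isometries. *)

Set Implicit Arguments. Unset Strict Implicit. Unset Printing Implicit Defensive.
Import GRing.Theory.
Local Open Scope ring_scope.

Section Hyperplanes.

Variables (F : fieldType) (n : nat).
Implicit Types (v x : 'rV[F]_n) (X Y : subsp F n).

Definition hyperplane v : subsp F n := lker (linfun (mulmxr v^T)).

Lemma memv_hyperplane v x : (x \in hyperplane v) = (x *m v^T == 0).
Proof. by rewrite memv_ker lfunE. Qed.

Lemma dim_rV : \dim (fullv : subsp F n) = n.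
Proof. by rewrite dimvf dim_matrix mul1r. Qed.

Lemma dim_hyperplane v : v != 0 -> \dim (hyperplane v) = n.-1.
Proof.
move=> nz_v; pose f := linfun (mulmxr v^T : 'rV[F]_n -> 'rV[F]_1).
have := limg_ker_dim f fullv; rewrite capfv dim_rV.
suff -> : \dim (limg f) = 1%N by rewrite addn1 => /(congr1 predn).
have [i vi] : exists i, v 0 i != 0.
  apply/existsP; apply: contraNT nz_v => /existsPn v0.
  by apply/eqP/rowP => i; rewrite mxE; apply/eqP/negPn/v0.
apply/anti_leq/andP; split.
  by rewrite (leq_trans (dimvS (subvf _))) // dimvf dim_matrix.
rewrite lt0n dimv_eq0; apply: contraNneq vi => f0.
have := memv_img f (memvf 'e_i); rewrite f0 memv0 lfunE /= -rowE.
by move/eqP/matrixP/(_ 0 0); rewrite !mxE => ->.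
Qed.

Lemma hyperplaneP X : (0 < n)%N -> \dim X = n.-1 ->
  exists2 v, v != 0 & X = hyperplane v.
Proof.
move=> n_gt0 dimX; set b := vbasis X.
pose M : 'M[F]_(\dim X, n) := \matrix_j tnth b j.
have : kermx M^T != 0.
  by rewrite -mxrank_eq0 mxrank_ker; have := rank_leq_col M^T; lia.
case/rowV0Pn => v /sub_kermxP vM nz_v; exists v => //.
have sXH : (X <= hyperplane v)%VS.
  rewrite -(span_basis (vbasisP X)); apply/span_subvP => _ /tnthP[j ->].
  rewrite memv_hyperplane -[tnth b j]rowK -row_mul -[M *m _]trmxK trmx_mul trmxK.
  by rewrite vM trmx0 row0.
by apply/eqP; rewrite -(dimv_leqif_eq sXH) dimX dim_hyperplane.
Qed.

End Hyperplanes.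

Lemma mx11_eq0 (R : nmodType) (A : 'M[R]_1) : (A == 0) = (A 0 0 == 0).
Proof.
apply/eqP/eqP => [->|A0]; first by rewrite mxE.
by apply/matrixP => i j; rewrite !ord1 A0 mxE.
Qed.

Lemma F2_inj_eq0 (a b : 'F_2) : (a == 0) = (b == 0) -> a = b.
Proof. by move: a b => [[|[|//]] ?] [[|[|//]] ?] //= _; apply: val_inj. Qed.

Lemma addrr_F2 n (v : 'rV['F_2]_n) : v + v = 0.
Proof. by apply/rowP => i; rewrite !mxE addrr_pchar2 ?pchar_Fp. Qed.

Lemma hyperplane_inj n : injective (@hyperplane 'F_2 n).
Proof.
move=> v w vw; apply/rowP => i.
have := memv_hyperplane v 'e_i; rewrite vw memv_hyperplane -!rowE !mx11_eq0 !mxE.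
by move/F2_inj_eq0 ->.
Qed.

Section SubspaceDistance.

Variables (F : fieldType) (n : nat).
Implicit Types X Y : subsp F n.

Lemma dS0v X : dS 0%VS X = \dim X.
Proof. by rewrite /dS cap0v dimv0 muln0 subn0. Qed.

Lemma dSvv X : dS X X = 0%N.
Proof. by rewrite /dS capvv addnn -mul2n subnn. Qed.

Lemma dSC X Y : dS X Y = dS Y X.
Proof. by rewrite /dS capvC addnC. Qed.

Lemma dS_hyperplanes X Y : \dim X = n.-1 -> \dim Y = n.-1 -> X != Y -> dS X Y = 2%N.
Proof.
move=> dimX dimY; apply: contraNeq => dS_XY.
have capX : (X :&: Y == X)%VS.
  rewrite -(dimv_leqif_eq (capvSl X Y)).
  have := dimv_sum_cap X Y; have := dimvS (subvf (X + Y)%VS).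
  have := dimvS (capvSl X Y); move: dS_XY; rewrite /dS dim_rV dimX dimY; lia.
by rewrite eqEdim dimX dimY leqnn andbT -(eqP capX) capvSr.
Qed.

End SubspaceDistance.

Section TransportedCode.

Variables (F : fieldType) (n : nat) (G : finZmodType) (q : G -> subsp F n).
Hypotheses (q_inj : injective q) (q0 : q 0 = 0%VS) (addrr_G : forall a : G, a + a = 0).

Definition q_inv (X : subsp F n) : G := odflt 0 [pick a | q a == X].

Lemma q_invK : cancel q q_inv.
Proof.
rewrite /q_inv => a; case: pickP => [b /eqP/q_inj // | /(_ a)].
by rewrite eqxx.
Qed.

Lemma linear_code_image : equidistant [fset q a | a in G]%fset ->
  linear_code [fset q a | a in G]%fset.
Proof.
move=> [r eq_r]; have qU a : q a \in [fset q a | a in G]%fset by apply: in_imfset.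
split; first by rewrite -q0 qU.
exists (fun X Y => q (q_inv X + q_inv Y)).
split; [|split; [|split; [|split; [|split; [|split]]]]].
- by move=> X Y _ _; apply: qU.
- by move=> _ _ _ /imfsetP[a _ ->] /imfsetP[b _ ->] /imfsetP[c _ ->]; rewrite !q_invK addrA.
- by move=> X Y _ _; rewrite addrC.
- by move=> _ /imfsetP[a _ ->]; rewrite -q0 !q_invK add0r addr0.
- by move=> _ /imfsetP[a _ ->]; exists (q a); rewrite // q_invK addrr_G.
- by move=> _ /imfsetP[a _ ->]; rewrite q_invK addrr_G.
move=> _ _ _ /imfsetP[b1 _ ->] /imfsetP[b2 _ ->] /imfsetP[a _ ->]; rewrite !q_invK.
have [-> | b12] := eqVneq b1 b2; first by rewrite !dSvv.
by rewrite !eq_r ?(inj_eq q_inj) ?(inj_eq (addIr a)).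
Qed.

End TransportedCode.

Section HyperplaneCode.

Variable n : nat.
Hypothesis n_gt1 : (1 < n)%N.

Definition hyperplane0 (v : 'rV['F_2]_n) : subsp 'F_2 n :=
  if v == 0 then 0%VS else hyperplane v.

Definition hyperplane_code : {fset subsp 'F_2 n} := [fset hyperplane0 v | v in 'rV_n]%fset.

Lemma hyperplane0_0 : hyperplane0 0 = 0%VS.
Proof. by rewrite /hyperplane0 eqxx. Qed.

Lemma hyperplane0_inj : injective hyperplane0.
Proof.
move=> v w; rewrite /hyperplane0.
have [-> | nz_v] := eqVneq v 0; have [-> | nz_w] := eqVneq w 0 => // eq_vw.
- by have := dim_hyperplane nz_w; rewrite -eq_vw dimv0; lia.
- by have := dim_hyperplane nz_v; rewrite eq_vw dimv0; lia.
- exact: hyperplane_inj.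
Qed.

Lemma mem_hyperplane_code X :
  (X \in hyperplane_code) = (X == 0%VS) || (\dim X == n.-1).
Proof.
apply/imfsetP/idP => [[v _ ->] | ].
  rewrite /hyperplane0; have [_ | nz_v] := eqVneq v 0; first by rewrite eqxx.
  by rewrite dim_hyperplane // eqxx orbT.
case/orP => [/eqP-> | /eqP/(hyperplaneP (ltnW n_gt1))[v nz_v ->]].
  by exists 0; rewrite /hyperplane0 ?eqxx.
by exists v; rewrite /hyperplane0 ?(negbTE nz_v).
Qed.

Lemma card_hyperplane_code : #|` hyperplane_code| = (2 ^ n)%N.
Proof.
rewrite card_imfset; last exact: hyperplane0_inj.
by rewrite -cardE card_mx card_ord mul1n.
Qed.

End HyperplaneCode.

Lemma hyperplane_code3_equidistant : equidistant (hyperplane_code 3).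
Proof.
exists 2%N => X Y; rewrite !mem_hyperplane_code //.
case/orP=> [/eqP-> | /eqP dimX]; case/orP=> [/eqP-> | /eqP dimY]; rewrite ?eqxx //.
- by rewrite dS0v dimY.
- by rewrite dSC dS0v dimX.
- exact: dS_hyperplanes.
Qed.

Lemma fset_two_others (K : choiceType) (A : {fset K}) (x : K) : (2 < #|` A|)%N ->
  exists y z, [/\ y \in A, z \in A, y != x, z != x & y != z].
Proof.
rewrite (cardfsD1 x) => A_gt2.
have /fset0Pn[y Ay] : (A `\ x != fset0)%fset by rewrite -cardfs_gt0; lia.
have /fset0Pn[z Az] : (A `\ x `\ y != fset0)%fset.
  by rewrite -cardfs_gt0; move: A_gt2; rewrite (cardfsD1 y) Ay; lia.
move: Ay Az; rewrite !in_fsetD1 => /andP[nyx Ay] /and3P[nzy nzx Az].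
by exists y, z; split; rewrite // eq_sym.
Qed.

Lemma equidistant_dim2 (F : fieldType) (U : {fset subsp F 3}) :
  0%VS \in U -> equidistant U -> (2 < #|` U|)%N ->
  forall X, X \in U -> X != 0%VS -> \dim X = 2%N.
Proof.
move=> U0 [r eq_r] U_gt2.
have dim_r X : X \in U -> X != 0%VS -> \dim X = r.
  by move=> XU nzX; rewrite -dS0v eq_r // eq_sym.
suff r2 : r = 2%N by move=> X XU nzX; rewrite dim_r // r2.
have [X [Y [XU YU nzX nzY XY]]] := fset_two_others 0%VS U_gt2.
have := eq_r X Y XU YU XY; have := dimvS (capvSl X Y); have := dimvS (subvf X).
have : \dim X != 0%N by rewrite dimv_eq0.
by rewrite /dS dim_rV (dim_r X) // (dim_r Y) //; lia.
Qed.

Theorem proposition1 :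
  exists! U : {fset subsp 'F_2 3},
    #|` U| = (2 ^ 3)%N /\ linear_code U /\ equidistant U.
Proof.
have eqd := hyperplane_code3_equidistant.
exists (hyperplane_code 3); split.
  split; first exact: card_hyperplane_code.
  split=> //.
  exact: linear_code_image (@hyperplane0_inj 3 isT) (hyperplane0_0 3) (@addrr_F2 3) eqd.
move=> U [cardU [[U0 _] eqU]].
have sub : (U `<=` hyperplane_code 3)%fset.
  apply/fsubsetP => X XU; rewrite mem_hyperplane_code //.
  by have [// | nzX] := eqVneq X 0%VS; rewrite (equidistant_dim2 U0 eqU) ?cardU.
by apply/eqP; rewrite eq_sym -(fsubset_leqif_cards sub) cardU card_hyperplane_code.
Qed.
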